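(* Let $n\ge 1$, let $\preceq$ be an admissible order on $L([0,1])$, let $F\colon L([0,1])\times L([0,1])\to L([0,1])$ and $G\colon L([0,1])^n\to L([0,1])$ be functions and let $m\colon 2^N\to L([0,1])$ be an IV fuzzy measure with respect to $\preceq$. Then: (i) if $m$ is symmetric, the triplet $(m,F,G)$ satisfies Condition (WDS) (for arbitrary $F,G$); (ii) if $G=f\circ \mathrm{Proj}_1$ for some function $f\colon L([0,1])\to L([0,1])$, then $(m,F,G)$ satisfies Condition (WDS) for any $m$; (iii) if $F$ is non-decreasing in the second variable and $G=f\circ\vee$ for some function $f\colon L([0,1])\to L([0,1])$, then $(m,F,G)$ satisfies Condition (WDS) for any $m$.
   Context: $N=\{1,\dots,n\}$. $L([0,1])=\{[a,b]: 0\le a\le b\le 1\}$, $\mathbf 0=[0,0]$, $\mathbf 1=[1,1]$. $[a,b]\le_{spo}[c,d]$ iff $a\le c$ and $b\le d$. An admissible order $\preceq$ on $L([0,1])$ is a total order such that $X\le_{spo}Y$ implies $X\preceq Y$. $\vee$ and $\wedge$ denote maximum and minimum with respect to $\preceq$ (of two or of $n$ intervals). An IV fuzzy measure w.r.t. $\preceq$ is $m\colon 2^N\to L([0,1])$ with $m(\emptyset)=\mathbf 0$, $m(N)=\mathbf 1$, $m(A)\preceq m(B)$ for $A\subseteq B$; it is symmetric if $m(A)=m(B)$ whenever $|A|=|B|$. $\mathrm{Proj}_1(X_1,\dots,X_n)=X_1$. Monotonicity (non-decreasing) is with respect to $\preceq$. For a permutation $\sigma$ of $N$, $E_{\sigma(i)}=\{\sigma(i),\dots,\sigma(n)\}$.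 The triplet $(m,F,G)$ satisfies Condition (WDS) if for all $X_1,\dots,X_n\in L([0,1])$ and all permutations $\sigma_1,\sigma_2$ of $N$ with $X_{\sigma_j(1)}\preceq\dots\preceq X_{\sigma_j(n)}$ ($j=1,2$) one has $G\big(F(X_{\sigma_1(1)},m(E_{\sigma_1(1)})),\dots,F(X_{\sigma_1(n)},m(E_{\sigma_1(n)}))\big)=G\big(F(X_{\sigma_2(1)},m(E_{\sigma_2(1)})),\dots,F(X_{\sigma_2(n)},m(E_{\sigma_2(n)}))\big)$. *)

From HB Require Import structures.
From mathcomp Require Import all_boot all_order all_algebra all_fingroup.
From mathcomp Require Import reals.
Set Implicit Arguments. Unset Strict Implicit. Unset Printing Implicit Defensive.
Import Order.TTheory GRing.Theory Num.Theory.
Local Open Scope ring_scope.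

(* L([0,1]) : closed subintervals [a,b] of [0,1], encoded as the pair (a,b). *)
Definition IV (R : realType) :=
  {p : R * R | [&& 0 <= p.1, p.1 <= p.2 & p.2 <= 1]}.

Definition lb {R : realType} (X : IV R) : R := (proj1_sig X).1.
Definition ub {R : realType} (X : IV R) : R := (proj1_sig X).2.

Lemma IV0_proof (R : realType) : [&& (0:R) <= ((0:R),(0:R)).1, ((0:R),(0:R)).1 <= ((0:R),(0:R)).2 & ((0:R),(0:R)).2 <= 1].
Proof. by rewrite /= lexx ler01. Qed.
Lemma IV1_proof (R : realType) : [&& (0:R) <= ((1:R),(1:R)).1, ((1:R),(1:R)).1 <= ((1:R),(1:R)).2 & ((1:R),(1:R)).2 <= 1].
Proof. by rewrite /= lexx ler01. Qed.

Definition IV0 (R : realType) : IV R := exist _ ((0:R), (0:R)) (IV0_proof R).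
Definition IV1 (R : realType) : IV R := exist _ ((1:R), (1:R)) (IV1_proof R).

Definition le_spo {R : realType} (X Y : IV R) : Prop :=
  lb X <= lb Y /\ ub X <= ub Y.

Definition admissible {R : realType} (le : IV R -> IV R -> bool) : Prop :=
  [/\ (forall X, le X X),
      (forall X Y, le X Y -> le Y X -> X = Y),
      (forall X Y Z, le X Y -> le Y Z -> le X Z),
      (forall X Y, le X Y || le Y X) &
      (forall X Y, le_spo X Y -> le X Y)].

Definition ivmax {R : realType} (le : IV R -> IV R -> bool) (X Y : IV R) : IV R :=
  if le X Y then Y else X.

(* n-ary maximum w.r.t. le of (Y_1,...,Y_n), here n = k.+1 *)
Definition ivmaxn {R : realType} (le : IV R -> IV R -> bool) {k : nat}
  (Y : 'I_k.+1 -> IV R) : IV R :=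
  foldl (fun acc i => ivmax le acc (Y i)) (Y ord0) (enum 'I_k.+1).

Definition iv_fuzzy_measure {R : realType} (le : IV R -> IV R -> bool) {k : nat}
  (m : {set 'I_k.+1} -> IV R) : Prop :=
  [/\ m set0 = IV0 R, m setT = IV1 R &
      (forall A B : {set 'I_k.+1}, A \subset B -> le (m A) (m B))].

Definition iv_symmetric {R : realType} {k : nat} (m : {set 'I_k.+1} -> IV R) : Prop :=
  forall A B : {set 'I_k.+1}, #|A| = #|B| -> m A = m B.

Definition Eset {k : nat} (s : {perm 'I_k.+1}) (i : 'I_k.+1) : {set 'I_k.+1} :=
  [set s j | j in [pred j : 'I_k.+1 | (i <= j)%N]].

Definition sorts {R : realType} (le : IV R -> IV R -> bool) {k : nat}
  (X : 'I_k.+1 -> IV R) (s : {perm 'I_k.+1}) : Prop :=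
  forall i j : 'I_k.+1, (i <= j)%N -> le (X (s i)) (X (s j)).

Definition WDS {R : realType} (le : IV R -> IV R -> bool) {k : nat}
  (m : {set 'I_k.+1} -> IV R) (F : IV R -> IV R -> IV R)
  (G : ('I_k.+1 -> IV R) -> IV R) : Prop :=
  forall (X : 'I_k.+1 -> IV R) (s1 s2 : {perm 'I_k.+1}),
    sorts le X s1 -> sorts le X s2 ->
    G (fun i => F (X (s1 i)) (m (Eset s1 i))) =
    G (fun i => F (X (s2 i)) (m (Eset s2 i))).

Definition nondecr2 {R : realType} (le : IV R -> IV R -> bool)
  (F : IV R -> IV R -> IV R) : Prop :=
  forall X Y Z, le Y Z -> le (F X Y) (F X Z).

(* Both sortings of X list the same values in the same order, since two sorted
   rearrangements of one multiset coincide for a total order.  This settles (i)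
   (the sets E_{sigma(i)} have the same size n - i + 1) and (ii) (E_{sigma(1)} = N).
   For (iii), let U(x) be the set of indices l with x <= X_l.  Always
   E_{sigma(i)} is contained in U(X_{sigma(i)}), with equality when i is the first
   position holding the value X_{sigma(i)}; hence, F being monotone in its second
   argument, the maximum of the terms F(X_{sigma(i)}, m(E_{sigma(i)})) is the
   maximum of F(X_l, m(U(X_l))) over l, which does not depend on sigma. *)
From HB Require Import structures.
From mathcomp Require Import all_boot all_order all_algebra all_fingroup.
From mathcomp Require Import reals.
From Stdlib Require Import FunctionalExtensionality.
Set Implicit Arguments. Unset Strict Implicit. Unset Printing Implicit Defensive.

Lemma mem_Eset (k : nat) (s : {perm 'I_k.+1}) (i x : 'I_k.+1) :
  (x \in Eset s i) = (i <= (s^-1)%g x)%N.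
Proof.
apply/imsetP/idP => [[j ij ->] | ix]; first by rewrite permK.
by exists ((s^-1)%g x); rewrite ?permKV.
Qed.

Lemma Eset_ord0 (k : nat) (s : {perm 'I_k.+1}) : Eset s ord0 = setT.
Proof. by apply/setP => x; rewrite mem_Eset inE. Qed.

Lemma card_Eset (k : nat) (s1 s2 : {perm 'I_k.+1}) (i : 'I_k.+1) :
  #|Eset s1 i| = #|Eset s2 i|.
Proof. by rewrite /Eset !card_imset //; apply: perm_inj. Qed.

Section AdmissibleOrder.
Variables (R : realType) (le : IV R -> IV R -> bool).
Hypothesis adm : admissible le.

Let le_refl : reflexive le. Proof. by case: adm. Qed.
Let le_anti : antisymmetric le.
Proof. by case: adm => _ anti _ _ _ X Y /andP[]; apply: anti. Qed.
Let le_trans : transitive le.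
Proof. by case: adm => _ _ trans _ _ Y X Z; apply: trans. Qed.
Let le_total : total le. Proof. by case: adm. Qed.

Section Sorting.
Variables (k : nat) (X : 'I_k.+1 -> IV R).

Lemma sorts_sorted (s : {perm 'I_k.+1}) :
  sorts le X s -> sorted le [seq X (s i) | i <- enum 'I_k.+1].
Proof.
move=> sorted_s; rewrite sorted_map.
apply: (@sub_sorted _ (relpre val ltn)) => [i j /ltnW | ]; first exact: sorted_s.
by rewrite -sorted_map val_enum_ord iota_ltn_sorted.
Qed.

Lemma perm_sorted_values (s : {perm 'I_k.+1}) :
  perm_eq [seq X (s i) | i <- enum 'I_k.+1] [seq X i | i <- enum 'I_k.+1].
Proof.
rewrite (map_comp X s); apply: perm_map.
apply: uniq_perm; rewrite ?(map_inj_uniq (@perm_inj _ s)) ?enum_uniq //.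
by move=> x; rewrite mem_enum -[x](permKV s) map_f ?mem_enum.
Qed.

Lemma sorts_eq (s1 s2 : {perm 'I_k.+1}) :
  sorts le X s1 -> sorts le X s2 -> forall i, X (s1 i) = X (s2 i).
Proof.
move=> sorted1 sorted2 i.
have eq_values :
    [seq X (s1 i) | i <- enum 'I_k.+1] = [seq X (s2 i) | i <- enum 'I_k.+1].
  apply: (sorted_eq le_trans le_anti); rewrite ?sorts_sorted //.
  by apply: perm_trans (perm_sorted_values s1) _; rewrite perm_sym perm_sorted_values.
by move/eq_in_map: eq_values; apply; rewrite mem_enum.
Qed.

Definition upper_set (x : IV R) : {set 'I_k.+1} := [set l | le x (X l)].

Lemma Eset_sub_upper_set (s : {perm 'I_k.+1}) (i : 'I_k.+1) :
  sorts le X s -> Eset s i \subset upper_set (X (s i)).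
Proof.
move=> sorted_s; apply/subsetP => x.
by rewrite mem_Eset inE -{2}[x](permKV s); apply: sorted_s.
Qed.

Lemma Eset_first_eq_upper_set (s : {perm 'I_k.+1}) (i : 'I_k.+1) :
  sorts le X s -> exists j : 'I_k.+1,
    X (s j) = X (s i) /\ Eset s j = upper_set (X (s i)).
Proof.
move=> sorted_s.
have [j /eqP eq_ji first_j] :=
  @arg_minnP _ i (fun j => X (s j) == X (s i)) (@nat_of_ord _) (eqxx _).
exists j; split => //; apply/eqP; rewrite eqEsubset -{1}eq_ji Eset_sub_upper_set //.
apply/subsetP => x; rewrite inE mem_Eset leqNgt => le_ix; apply/negP => lt_xj.
have /eqP/first_j : X (s ((s^-1)%g x)) = X (s i).
  by apply: le_anti; rewrite -{1}eq_ji sorted_s ?(ltnW lt_xj) //= permKV le_ix.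
by rewrite leqNgt lt_xj.
Qed.

End Sorting.

Lemma ivmax_ge_l (x y : IV R) : le x (ivmax le x y).
Proof. by rewrite /ivmax; case: ifP. Qed.

Lemma ivmax_ge_r (x y : IV R) : le y (ivmax le x y).
Proof. by rewrite /ivmax; case: ifP => // /negbT; case/orP: (le_total x y) => ->. Qed.

Section Maximum.
Variables (k : nat) (Y : 'I_k.+1 -> IV R).
Let step (acc : IV R) (i : 'I_k.+1) := ivmax le acc (Y i).

Lemma foldl_ivmax_ge (s : seq 'I_k.+1) (acc : IV R) :
  le acc (foldl step acc s) /\ {in s, forall i, le (Y i) (foldl step acc s)}.
Proof.
elim: s acc => [|a s IH] acc //=; have [le_step le_s] := IH (step acc a).
split=> [|i]; first exact: le_trans (ivmax_ge_l _ _) le_step.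
by rewrite inE => /predU1P[-> | /le_s //]; apply: le_trans (ivmax_ge_r _ _) le_step.
Qed.

Lemma foldl_ivmax_mem (s : seq 'I_k.+1) (acc : IV R) :
  foldl step acc s = acc \/ exists2 i, i \in s & foldl step acc s = Y i.
Proof.
elim: s acc => [|a s IH] acc /=; first by left.
have [-> | [i si ->]] := IH (step acc a); last by right; exists i; rewrite // inE si orbT.
by rewrite /step /ivmax; case: ifP => _; [right; exists a; rewrite ?inE ?eqxx | left].
Qed.

Lemma ivmaxn_ge (i : 'I_k.+1) : le (Y i) (ivmaxn le Y).
Proof. by apply: (foldl_ivmax_ge _ _).2; rewrite mem_enum. Qed.

Lemma ivmaxn_mem : exists i, ivmaxn le Y = Y i.
Proof.
by have [|[i _]] := foldl_ivmax_mem (enum 'I_k.+1) (Y ord0); [exists ord0 | exists i].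
Qed.

End Maximum.

Lemma ivmaxn_le (k : nat) (Y Z : 'I_k.+1 -> IV R) :
  (forall i, exists j, le (Y i) (Z j)) -> le (ivmaxn le Y) (ivmaxn le Z).
Proof.
move=> dom; have [i ->] := ivmaxn_mem Y; have [j le_ij] := dom i.
exact: le_trans le_ij (ivmaxn_ge Z j).
Qed.

Lemma ivmaxn_Eset_terms (k : nat) (F : IV R -> IV R -> IV R)
    (m : {set 'I_k.+1} -> IV R) (X : 'I_k.+1 -> IV R) (s : {perm 'I_k.+1}) :
  nondecr2 le F -> (forall A B : {set 'I_k.+1}, A \subset B -> le (m A) (m B)) ->
  sorts le X s ->
  ivmaxn le (fun i => F (X (s i)) (m (Eset s i))) =
  ivmaxn le (fun l => F (X l) (m (upper_set X (X l)))).
Proof.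
move=> monoF monom sorted_s; apply: le_anti; rewrite !ivmaxn_le // => [l | i].
  have [j [eq_j E_j]] := Eset_first_eq_upper_set ((s^-1)%g l) sorted_s.
  by exists j; rewrite E_j eq_j permKV; apply: le_refl.
by exists (s i); apply/monoF/monom/Eset_sub_upper_set.
Qed.

End AdmissibleOrder.

Theorem proposition1 (R : realType) (k : nat) (le : IV R -> IV R -> bool)
  (F : IV R -> IV R -> IV R) (G : ('I_k.+1 -> IV R) -> IV R)
  (m : {set 'I_k.+1} -> IV R) :
  admissible le -> iv_fuzzy_measure le m ->
  [/\ (iv_symmetric m -> WDS le m F G),
      ((exists f : IV R -> IV R, G = (fun Y => f (Y ord0))) -> WDS le m F G) &
      (nondecr2 le F ->
       (exists f : IV R -> IV R, G = (fun Y => f (ivmaxn le Y))) -> WDS le m F G)].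
Proof.
move=> adm [_ _ monom]; split.
- move=> sym X s1 s2 sorted1 sorted2; congr G; apply: functional_extensionality => i.
  by rewrite (sorts_eq adm sorted1 sorted2) (sym _ _ (card_Eset s1 s2 i)).
- move=> [f ->] X s1 s2 sorted1 sorted2 /=.
  by rewrite (sorts_eq adm sorted1 sorted2) !Eset_ord0.
- move=> monoF [f ->] X s1 s2 sorted1 sorted2 /=.
  by rewrite !(ivmaxn_Eset_terms adm monoF monom).
Qed.
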